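(* For every fixed integer $r\ge1$ and every family $F$ of functions whose codomain has size $k$ and with $\mathrm{opt}_{\mathrm{std}}(F)\le r$, we have $\mathrm{opt}_{\mathrm{amb},r}(F)\le (rk)^{\mathrm{opt}_{\mathrm{std}}(F)}$.
   Context: Let $F$ be a family of functions from $X$ to $Y$. In online learning an adversary secretly fixes $f\in F$ and presents inputs; the learner guesses values of $f$. In the standard model each input is presented singly and after the guess the true value is revealed; $\mathrm{opt}_{\mathrm{std}}(F)$ is the maximum number of incorrect guesses under optimal play by both sides. In the $r$-delayed ambiguous reinforcement model, each round $i$ consists of $r$ inputs $x_{i,1},\dots,x_{i,r}$ given one at a time: the learner must guess $f(x_{i,j})$ before receiving $x_{i,j+1}$; after all $r$ guesses the adversary says YES if all $r$ guesses were correct and NO otherwise. A mistake is a round with answer NO. $\mathrm{opt}_{\mathrm{amb},r}(F)$ is the maximum number of mistakes under optimal play by both learner and adversary (answers consistent with some $f\in F$). *)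

From mathcomp Require Import all_boot.
Set Implicit Arguments. Unset Strict Implicit. Unset Printing Implicit Defensive.

Section Learning.
Variables (X : Type) (Y : finType).

Definition std_learner := seq (X * Y) -> X -> Y.

Fixpoint std_mistakes (L : std_learner) (f : X -> Y) (h : seq (X * Y))
    (xs : seq X) : nat :=
  match xs with
  | [::] => 0
  | x :: xs' => (L h x != f x) + std_mistakes L f (rcons h (x, f x)) xs'
  end.

Definition std_bound (F : (X -> Y) -> Prop) (m : nat) : Prop :=
  exists L : std_learner, forall f, F f -> forall xs : seq X,
    std_mistakes L f [::] xs <= m.

Definition opt_std_is (F : (X -> Y) -> Prop) (d : nat) : Prop :=
  std_bound F d /\ forall d', std_bound F d' -> d <= d'.

(* A learner sees the history of past rounds (their inputs and the YES/NO
   answer), the inputs already given in the current round, and the current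
   input. (Its own past guesses are determined by this data.) *)
Definition amb_learner := seq (seq X * bool) -> seq X -> X -> Y.

Fixpoint round_ok (L : amb_learner) (f : X -> Y) (h : seq (seq X * bool))
    (pre xs : seq X) : bool :=
  match xs with
  | [::] => true
  | x :: xs' => (L h pre x == f x) && round_ok L f h (rcons pre x) xs'
  end.

Fixpoint amb_mistakes (L : amb_learner) (f : X -> Y) (h : seq (seq X * bool))
    (rs : seq (seq X)) : nat :=
  match rs with
  | [::] => 0
  | xs :: rs' =>
      let b := round_ok L f h [::] xs in
      (~~ b) + amb_mistakes L f (rcons h (xs, b)) rs'
  end.

Definition amb_bound (r : nat) (F : (X -> Y) -> Prop) (m : nat) : Prop :=
  exists L : amb_learner, forall f, F f -> forall rs : seq (seq X),
    all (fun xs => size xs == r) rs -> amb_mistakes L f [::] rs <= m.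

End Learning.

(* The ambiguous learner runs a depth-first search over candidate labelings
   of the past inputs, predicting with the standard learner [L] fed with the
   current candidate.  After a NO the current candidate is replaced by its
   branches: follow [L]'s predictions on the round up to some input and then
   deviate from [L] there.  A candidate consistent with the target always
   stays on the stack, and for it the number of deviations from [L] is the
   number of mistakes [L] makes on it, hence at most [d]; so the search tree
   has depth at most [d] and branching at most [b = r (#|Y| - 1)].  Every NO
   answer removes at least one node from the unexplored part of this tree,
   which initially has at most [(b + 1)^d <= (r #|Y|)^d] nodes. *)
From mathcomp Require Import all_boot zify.
Set Implicit Arguments. Unset Strict Implicit. Unset Printing Implicit Defensive.

Fixpoint tree_size (b n : nat) : nat :=
  if n is n'.+1 then (b * tree_size b n').+1 else 1.

Lemma tree_size_gt0 b n : 0 < tree_size b n.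
Proof. by case: n. Qed.

Lemma tree_size0 n : tree_size 0 n = 1.
Proof. by case: n. Qed.

Lemma tree_size_le_exp b n : tree_size b n <= b.+1 ^ n.
Proof.
elim: n => [|n IH] //=.
by rewrite expnS mulSn -add1n leq_add ?expn_gt0 ?leq_mul.
Qed.

Lemma big_all_const (T : Type) (s : seq T) (F : T -> nat) k :
  all (fun c => F c == k) s -> \sum_(c <- s) F c = size s * k.
Proof.
elim: s => [|c s IH]; rewrite ?big_nil ?big_cons //= => /andP [/eqP -> /IH ->].
by rewrite mulSn.
Qed.

Section Simulation.
Variables (X : Type) (Y : finType) (L : std_learner X Y).

Fixpoint follow (h : seq (X * Y)) (xs : seq X) : seq (X * Y) :=
  if xs is x :: xs' then (x, L h x) :: follow (rcons h (x, L h x)) xs' else [::].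

Fixpoint deviations (h s : seq (X * Y)) : nat :=
  match s with
  | [::] => 0
  | (x, y) :: s' => (L h x != y) + deviations (rcons h (x, y)) s'
  end.

Fixpoint branches (g : seq (X * Y)) (xs : seq X) : seq (seq (X * Y)) :=
  if xs is x :: xs' then
    [seq rcons g (x, y) | y <- enum Y & y != L g x]
      ++ branches (rcons g (x, L g x)) xs'
  else [::].

Lemma follow_rcons h pre x :
  follow h (rcons pre x) = rcons (follow h pre) (x, L (h ++ follow h pre) x).
Proof.
elim: pre h => [|y pre IH] h /=; first by rewrite cats0.
by rewrite IH cat_rcons.
Qed.

Lemma deviations_cat h s t :
  deviations h (s ++ t) = deviations h s + deviations (h ++ s) t.
Proof.
elim: s h => [|[x y] s IH] h /=; first by rewrite cats0.
by rewrite IH addnA cat_rcons.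
Qed.

Lemma deviations_rcons g x y :
  deviations [::] (rcons g (x, y)) = deviations [::] g + (L g x != y).
Proof. by rewrite -cats1 deviations_cat /= addn0. Qed.

Lemma deviations_follow h xs : deviations h (follow h xs) = 0.
Proof. by elim: xs h => [|x xs IH] h //=; rewrite eqxx IH. Qed.

Lemma deviations_branches g xs :
  all (fun c => deviations [::] c == (deviations [::] g).+1) (branches g xs).
Proof.
elim: xs g => [|x xs IH] g //=; rewrite all_cat all_map.
apply/andP; split.
- apply/allP => y; rewrite mem_filter => /andP [y_dev _] /=.
  by rewrite deviations_rcons (eq_sym (L g x)) y_dev addn1.
- by have := IH (rcons g (x, L g x)); rewrite deviations_rcons eqxx addn0.
Qed.

Lemma size_branches g xs : size (branches g xs) <= size xs * #|Y|.-1.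
Proof.
elim: xs g => [|x xs IH] g //=.
rewrite size_cat size_map mulSn leq_add //.
by rewrite -(cardC1 (L g x)) cardE /enum_mem -enumT filter_predT.
Qed.

Variable f : X -> Y.

Definition consistent (s : seq (X * Y)) := all (fun p => f p.1 == p.2) s.

Lemma consistent_cat s t : consistent (s ++ t) = consistent s && consistent t.
Proof. exact: all_cat. Qed.

Definition graph (xs : seq X) := [seq (x, f x) | x <- xs].

Lemma std_mistakesE h xs : std_mistakes L f h xs = deviations h (graph xs).
Proof. by elim: xs h => [|x xs IH] h //=; rewrite IH. Qed.

Lemma consistent_graph s : consistent s -> graph (map fst s) = s.
Proof. by elim: s => [|[x y] s IH] //= /andP [/eqP /= -> /IH ->]. Qed.

Lemma consistent_follow h xs :
  consistent (follow h xs) = (deviations h (graph xs) == 0).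
Proof.
elim: xs h => [|x xs IH] h //=.
by case: eqVneq => [-> | /negPf fxNL]; rewrite /= ?IH // eq_sym fxNL.
Qed.

Lemma has_consistent_branches g xs : consistent g ->
  ~~ consistent (follow g xs) -> has consistent (branches g xs).
Proof.
elim: xs g => [|x xs IH] g g_cons //=; rewrite has_cat.
case: (eqVneq (f x) (L g x)) => [fxL | fxNL] /= follow_incons.
- by rewrite IH ?orbT // /consistent all_rcons /= fxL eqxx.
- apply/orP; left; rewrite has_map; apply/hasP; exists (f x).
    by rewrite mem_filter mem_enum fxNL.
  by rewrite /= /consistent all_rcons /= eqxx.
Qed.

End Simulation.

Section AmbiguousLearner.
Variables (X : Type) (Y : finType) (L : std_learner X Y) (d : nat).

(* The state is a stack of candidate labelings of the past inputs; its head
   is the candidate [L] is currently simulated on. *)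
Definition explore (st : seq (seq (X * Y))) (round : seq X * bool) :=
  if st is g :: rest then
    if round.2 then (g ++ follow L g round.1) :: rest
    else (if deviations L [::] g < d then branches L g round.1 else [::]) ++ rest
  else [::].

Definition candidates (H : seq (seq X * bool)) := foldl explore [:: [::]] H.

Definition amb_of_std : amb_learner X Y :=
  fun H pre x => let g := head [::] (candidates H) in L (g ++ follow L g pre) x.

Lemma round_ok_amb_of_std f H xs : round_ok amb_of_std f H [::] xs =
  consistent f (follow L (head [::] (candidates H)) xs).
Proof.
set g := head [::] _; rewrite -[in RHS](cats0 g).
have -> : g ++ [::] = g ++ follow L g [::] by [].
elim: xs [::] => [|x xs IH] pre //=.
by rewrite IH follow_rcons -rcons_cat eq_sym.
Qed.

Variables (r : nat) (f : X -> Y).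
Hypothesis L_mistakes : forall xs, std_mistakes L f [::] xs <= d.

Definition unexplored (st : seq (seq (X * Y))) :=
  \sum_(g <- st) tree_size (r * #|Y|.-1) (d - deviations L [::] g).

Lemma consistent_follow_deep g xs : consistent f g ->
  d <= deviations L [::] g -> consistent f (follow L g xs).
Proof.
move=> g_cons g_deep; rewrite consistent_follow.
have := L_mistakes (map fst g ++ xs).
rewrite std_mistakesE /graph map_cat -/(graph f _) consistent_graph //.
rewrite deviations_cat /=; lia.
Qed.

Lemma has_consistent_explore st xs : has (consistent f) st ->
  has (consistent f) (explore st (xs, consistent f (follow L (head [::] st) xs))).
Proof.
case: st => [|g rest] //=; case: ifP => [ok | /negbT fail].
  case/orP => [g_cons | rest_cons] /=; last by rewrite rest_cons orbT.
  by rewrite consistent_cat g_cons ok.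
rewrite has_cat; case/orP => [g_cons | ->]; last by rewrite orbT.
have g_shallow : deviations L [::] g < d.
  by rewrite ltnNge; apply: contra fail => /(consistent_follow_deep xs g_cons).
by rewrite g_shallow has_consistent_branches.
Qed.

Lemma unexplored_explore g rest xs ok : size xs = r ->
  unexplored (explore (g :: rest) (xs, ok)) + ~~ ok <= unexplored (g :: rest).
Proof.
rewrite /unexplored /= big_cons => size_xs; set b := r * #|Y|.-1.
case: ok => /=.
  by rewrite big_cons deviations_cat deviations_follow !addn0.
rewrite big_cat addn1 ltn_add2r; set D := deviations L [::] g.
have [D_lt_d | _] := ltnP D d; last by rewrite big_nil tree_size_gt0.
have -> : d - D = (d - D.+1).+1 by lia.
rewrite [tree_size _ _.+1]/= ltnS (big_all_const (k := tree_size b (d - D.+1))).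
  by rewrite leq_mul2r /b -size_xs size_branches orbT.
by apply: sub_all (deviations_branches L g xs) => c /eqP ->.
Qed.

Lemma amb_mistakes_lt_unexplored H rs : all (fun xs => size xs == r) rs ->
  has (consistent f) (candidates H) ->
  amb_mistakes amb_of_std f H rs < unexplored (candidates H).
Proof.
elim: rs H => [|xs rs IH] H /=.
  case: (candidates H) => [|g rest] //= _ _.
  by rewrite /unexplored big_cons addn_gt0 tree_size_gt0.
case/andP => /eqP size_xs rs_size cons_H; rewrite round_ok_amb_of_std.
have := IH (rcons H (xs, consistent f (follow L (head [::] (candidates H)) xs))).
rewrite /candidates foldl_rcons -/(candidates H).
move=> /(_ rs_size (has_consistent_explore xs cons_H)).
case: (candidates H) cons_H => [|g rest] // _.
have := unexplored_explore g rest (consistent f (follow L g xs)) size_xs.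
rewrite /=; lia.
Qed.

Lemma amb_of_std_mistakes rs : all (fun xs => size xs == r) rs ->
  amb_mistakes amb_of_std f [::] rs < tree_size (r * #|Y|.-1) d.
Proof.
move=> rs_size; have := amb_mistakes_lt_unexplored (H := [::]) rs_size.
by rewrite /unexplored /= big_cons big_nil subn0 addn0; apply.
Qed.

End AmbiguousLearner.

Theorem mainTheorem10 (r : nat) (X : Type) (Y : finType)
    (F : (X -> Y) -> Prop) (d : nat) :
  0 < r -> opt_std_is F d -> d <= r ->
  amb_bound r F ((r * #|Y|) ^ d).
Proof.
move=> r_gt0 [[L L_mistakes] _] _.
exists (amb_of_std L d) => f Ff rs rs_size.
have := amb_of_std_mistakes (L_mistakes f Ff) rs_size.
case: (posnP #|Y|) => [-> | Y_gt0].
  by rewrite muln0 tree_size0 ltnS leqn0 => /eqP ->.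
move=> /ltnW /leq_trans -> //; apply: leq_trans (tree_size_le_exp _ _) _.
have [-> // | d_gt0] := posnP d; rewrite leq_exp2r //; nia.
Qed.
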